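(* Let $\theta\in[0,\pi)\setminus\{\pi/2\}$, $\kappa(\theta):=\gamma-\log2+\tan\theta$, and for $t\ge0$ define $$K_\theta(t):=\lim_{R\to\infty}\frac{1}{2\pi i}\int_{-iR}^{iR}e^{t\zeta}\big(\log\sqrt\zeta+\kappa(\theta)\big)^{-1}d\zeta$$ (integral along the imaginary axis). Then there is a bounded function $K^1_\theta\in C^\infty([0,\infty))$ such that for $t>0$ $$K_\theta(t)=-\frac1\pi\,\mathrm{Im}\left\{\int_1^\infty e^{-ty}\big(\log\sqrt y+i\pi/2+\kappa(\theta)\big)^{-1}dy\right\}+K^1_\theta(t)=2\int_1^\infty\frac{e^{-ty}}{(\log y+2\kappa(\theta))^2+\pi^2}\,dy+K^1_\theta(t).$$
   Context: $\gamma$ is the Euler–Mascheroni constant; $\sqrt\zeta$ and $\log\zeta$ denote the principal branches on $\mathbb C\setminus(-\infty,0]$, extended to the imaginary axis by continuity away from $0$ (at $\zeta=0$ the integrand is interpreted as its limit $0$). *)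

From Stdlib Require Import Reals.
Open Scope R_scope.

Definition kappa (gam theta : R) : R := gam - ln 2 + tan theta.

Definition sgn (y : R) : R :=
  if Rlt_dec 0 y then 1 else if Rlt_dec y 0 then -1 else 0.

(* On zeta = i y (y <> 0): log sqrt(i y) = (1/2) ln|y| + i (pi/4) sgn y.
   The contour integral (1/(2 pi i)) int_{-iR}^{iR} e^{t zeta} (log sqrt zeta + kappa)^{-1} dzeta
   equals (1/(2 pi)) int_{-R}^{R} e^{i t y} (a(y) + i b(y))^{-1} dy
   with a = (1/2) ln|y| + kappa, b = (pi/4) sgn y.
   Real and imaginary parts of the integrand; value 0 at y = 0 (the limit). *)
Definition Kint_re (kap t y : R) : R :=
  if Req_EM_T y 0 then 0 else
  let a := / 2 * ln (Rabs y) + kap in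
  let b := PI / 4 * sgn y in
  (cos (t * y) * a + sin (t * y) * b) / (a ^ 2 + b ^ 2).

Definition Kint_im (kap t y : R) : R :=
  if Req_EM_T y 0 then 0 else
  let a := / 2 * ln (Rabs y) + kap in
  let b := PI / 4 * sgn y in
  (sin (t * y) * a - cos (t * y) * b) / (a ^ 2 + b ^ 2).

Definition sym_improper_int (f : R -> R) (L : R) : Prop :=
  (forall Rr, 0 <= Rr -> inhabited (Riemann_integrable f (- Rr) Rr)) /\
  (forall eps, 0 < eps -> exists M, forall Rr (pr : Riemann_integrable f (- Rr) Rr),
      M <= Rr -> Rabs (RiemannInt pr - L) < eps).

Definition improper_int_from1 (f : R -> R) (L : R) : Prop :=
  (forall b, 1 <= b -> inhabited (Riemann_integrable f 1 b)) /\
  (forall eps, 0 < eps -> exists M, forall b (pr : Riemann_integrable f 1 b),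
      M <= b -> Rabs (RiemannInt pr - L) < eps).

Definition Cinv_im (x y : R) : R := - y / (x ^ 2 + y ^ 2).

Definition bounded_on_nonneg (f : R -> R) : Prop :=
  exists M, forall t, 0 <= t -> Rabs (f t) <= M.

Definition smooth_on_nonneg (f : R -> R) : Prop :=
  exists D : nat -> R -> R,
    (forall x, 0 <= x -> D O x = f x) /\
    forall n,
      (forall x, 0 < x -> derivable_pt_lim (D n) x (D (S n) x)) /\
      (forall eps, 0 < eps -> exists del, 0 < del /\ forall h, 0 < h < del ->
         Rabs ((D n h - D n 0) / h - D (S n) 0) < eps).

From Coquelicot Require Import Coquelicot.
From Stdlib Require Import Reals Lra.
Open Scope R_scope.

(** Proposition 5.1.  On [z = i y] the integrand of [K_theta(t)], divided by [2 PI],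
    has real part [Kint_re] (even in [y]) and imaginary part [Kint_im] (odd in [y]),
    so the symmetric integrals of [Kint_im] vanish and those of [Kint_re] are twice
    [int_0^R Kint_re].  The heart of the proof is a contour deformation: the integrand
    [f z = exp (t z) / (ln sqrt z + k)] is holomorphic in the sector
    [PI/2 <= arg z <= PI], and rotating the half-axis [arg z = PI/2] onto the cut
    [arg z = PI] turns [int_0^R Kint_re] into [int_0^R PI exp (- t r) w(r) dr], with
    [w(r) = 2 / ((ln r + 2 k) ^ 2 + PI ^ 2)].  Cauchy's theorem is proved by hand in
    polar coordinates: by the Cauchy-Riemann equations the [p]-derivative of
    [int_eps^R Im (e^(ip) f (r e^(ip))) dr] is a boundary term on the two arcs, and a
    Jordan-type inequality bounds the big arc by [8 / (t |ln sqrt R + k|)] and the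
    small one by [O(eps)].  Splitting the cut integral at [r = 1] gives the smooth
    bounded part [K1(t) = int_0^1 exp (- t r) w(r) dr] and the integral over
    [[1, oo)] of the statement.  The result holds for every real [k], so neither the
    value of [gam] nor the range of [theta] is used. *)

(** * Continuity of functions of two real variables

    The tactic [cont2] proves it by structural recursion on the expression.
    Coquelicot's generic lemmas are stated with [mult]/[plus], so we restate the
    ones we need on [R * R -> R]. *)

Lemma cont2_mult (f g : R * R -> R) p :
  continuous f p -> continuous g p -> continuous (fun q => f q * g q) p.
Proof. intros; apply (continuous_mult f g); auto. Qed.

Lemma cont2_plus (f g : R * R -> R) p :
  continuous f p -> continuous g p -> continuous (fun q => f q + g q) p.
Proof. intros; apply (continuous_plus f g); auto. Qed.

Lemma cont2_opp (f : R * R -> R) p : continuous f p -> continuous (fun q => - f q) p.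
Proof. intros; apply (continuous_opp f); auto. Qed.

Lemma cont2_minus (f g : R * R -> R) p :
  continuous f p -> continuous g p -> continuous (fun q => f q - g q) p.
Proof. intros; apply cont2_plus; auto; apply cont2_opp; auto. Qed.

Lemma cont2_comp (f : R * R -> R) (h : R -> R) p :
  continuous f p -> continuous h (f p) -> continuous (fun q => h (f q)) p.
Proof. intros; apply (continuous_comp f h); auto. Qed.

Lemma cont2_inv (f : R * R -> R) p :
  continuous f p -> f p <> 0 -> continuous (fun q => / f q) p.
Proof.
  intros; apply (cont2_comp f Rinv); auto.
  apply continuity_pt_filterlim, continuity_pt_inv; auto using continuity_pt_id.
Qed.

Lemma cont2_div (f g : R * R -> R) p :
  continuous f p -> continuous g p -> g p <> 0 -> continuous (fun q => f q / g q) p.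
Proof. intros; apply cont2_mult; auto; apply cont2_inv; auto. Qed.

Lemma cont2_pow (f : R * R -> R) n p : continuous f p -> continuous (fun q => f q ^ n) p.
Proof. intros; induction n; simpl; [apply continuous_const | apply cont2_mult; auto]. Qed.

Lemma continuous_exp x : continuous exp x.
Proof. apply continuity_pt_filterlim, derivable_continuous_pt, derivable_pt_exp. Qed.

Ltac cont2 :=
  match goal with
  | |- continuous (fun q => @?f q * @?g q) _ => apply (cont2_mult f g); cont2
  | |- continuous (fun q => @?f q / @?g q) _ => apply (cont2_div f g); [cont2 | cont2 |]
  | |- continuous (fun q => @?f q + @?g q) _ => apply (cont2_plus f g); cont2
  | |- continuous (fun q => @?f q - @?g q) _ => apply (cont2_minus f g); cont2
  | |- continuous (fun q => - @?f q) _ => apply (cont2_opp f); cont2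
  | |- continuous (fun q => / @?f q) _ => apply (cont2_inv f); [cont2 |]
  | |- continuous (fun q => @?f q ^ ?n) _ => apply (cont2_pow f n); cont2
  | |- continuous (fun q => sin (@?f q)) _ =>
      apply (cont2_comp f sin); [cont2 | apply continuity_pt_filterlim, continuity_sin]
  | |- continuous (fun q => cos (@?f q)) _ =>
      apply (cont2_comp f cos); [cont2 | apply continuity_pt_filterlim, continuity_cos]
  | |- continuous (fun q => exp (@?f q)) _ =>
      apply (cont2_comp f exp); [cont2 | apply continuous_exp]
  | |- continuous (fun q => ln (@?f q)) _ =>
      apply (cont2_comp f ln); [cont2 | apply continuous_ln]
  | |- continuous (fun q => fst q) (?a, ?b) => apply continuous_fst
  | |- continuous (fun q => snd q) (?a, ?b) => apply continuous_snd
  | |- continuous (fun q => _) _ => apply continuous_const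
  | _ => idtac
  end.

Lemma PI_gt_2 : 2 < PI.
Proof. pose proof PI2_1; lra. Qed.

Lemma sum_sq_pos a b : b <> 0 -> 0 < a ^ 2 + b ^ 2.
Proof. intros Hb; pose proof (pow2_ge_0 a); assert (0 < b ^ 2) by (apply pow2_gt_0; auto); lra. Qed.

(** [cquot u v c s] is the real part of [(c + i s) / (u + i v)]; its imaginary part is
    [cquot u v s (- c)]. *)
Definition cquot (u v c s : R) : R := (u * c + v * s) / (u ^ 2 + v ^ 2).

Lemma div_le_div a b c d : 0 < b -> 0 < d -> a * d <= c * b -> a / b <= c / d.
Proof.
  intros Hb Hd H. apply (Rmult_le_reg_r (b * d)); [nra |].
  replace (a / b * (b * d)) with (a * d) by (field; lra).
  replace (c / d * (b * d)) with (c * b) by (field; lra). exact H.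
Qed.

Lemma div_le_of_le_mul a b c : 0 < b -> a <= c * b -> a / b <= c.
Proof. intros Hb H. replace c with (c * b / b) by (field; lra). apply div_le_div; nra. Qed.

Lemma exp_mono x y : x <= y -> exp x <= exp y.
Proof. intros [H | ->]; [left; apply exp_increasing | right]; auto. Qed.

Lemma exp_le_1 x : x <= 0 -> exp x <= 1.
Proof. intros; rewrite <- exp_0; apply exp_mono; auto. Qed.

Lemma cquot_bound_im u v c s : -1 <= c <= 1 -> -1 <= s <= 1 -> 0 < Rabs v ->
  Rabs (cquot u v c s) <= 2 / Rabs v.
Proof.
  intros Hc Hs Hv. unfold cquot.
  rewrite <- (pow2_abs u), <- (pow2_abs v).
  pose proof (Rabs_pos u) as Hu. pose proof (pow2_ge_0 (Rabs u)).
  assert (0 < Rabs v ^ 2) by (apply pow2_gt_0; lra).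
  assert (Hnum : Rabs (u * c + v * s) <= Rabs u + Rabs v).
  { eapply Rle_trans; [apply Rabs_triang |]. rewrite !Rabs_mult.
    assert (Rabs c <= 1) by (apply Rabs_le; lra). assert (Rabs s <= 1) by (apply Rabs_le; lra).
    pose proof (Rabs_pos c); pose proof (Rabs_pos s). nra. }
  unfold Rdiv at 1. rewrite Rabs_mult, Rabs_inv, (Rabs_pos_eq (Rabs u ^ 2 + _)) by lra.
  apply Rle_trans with ((Rabs u + Rabs v) / (Rabs u ^ 2 + Rabs v ^ 2)).
  - apply Rmult_le_compat_r; [left; apply Rinv_0_lt_compat; nra | exact Hnum].
  - apply div_le_div; simpl in *; nra.
Qed.

Lemma cquot_bound_re u v c s : -1 <= c <= 1 -> -1 <= s <= 1 -> 0 < Rabs u ->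
  Rabs (cquot u v c s) <= 2 / Rabs u.
Proof.
  intros. replace (cquot u v c s) with (cquot v u s c) by (unfold cquot; f_equal; ring).
  apply cquot_bound_im; auto.
Qed.

(** A crude linear lower bound for [sin] on [[0, PI/2]], from the Taylor minorant
    [sin_lb]; it yields Jordan's inequality for [cos] on [[PI/2, PI]]. *)
Lemma sin_ge_quarter s : 0 <= s <= PI / 2 -> s / 4 <= sin s.
Proof.
  intros Hs. pose proof PI_gt_2. pose proof PI_4.
  assert (Hlb : forall a, sin_lb a = a - a ^ 3 / 6 + a ^ 5 / 120 - a ^ 7 / 5040)
    by (intros a; unfold sin_lb, sin_approx, sin_term; simpl; field).
  destruct (Rle_lt_dec s 1).
  - destruct (SIN s) as [Hs1 _]; try lra. rewrite Hlb in Hs1.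
    assert (H3 : 0 <= s ^ 3 <= s) by (replace (s ^ 3) with (s * (s * s)) by ring; split; nra).
    assert (s ^ 3 * s ^ 3 <= 1) by nra.
    assert (s ^ 7 <= s) by (replace (s ^ 7) with (s * (s ^ 3 * s ^ 3)) by ring; nra).
    assert (0 <= s ^ 5) by (apply pow_le; lra). lra.
  - assert (sin 1 <= sin s) by (apply sin_incr_1; lra).
    destruct (SIN 1) as [Hsin1 _]; try lra. rewrite Hlb in Hsin1. lra.
Qed.

Lemma cos_jordan p : PI / 2 <= p <= PI -> cos p <= - ((p - PI / 2) / 4).
Proof.
  intros Hp. replace p with ((p - PI / 2) + PI / 2) at 1 by ring.
  rewrite cos_plus, cos_PI2, sin_PI2. pose proof (sin_ge_quarter (p - PI / 2)). lra.
Qed.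

Lemma ex_RInt_cont (f : R -> R) a b : (forall x, continuous f x) -> ex_RInt f a b.
Proof. intros H; apply (ex_RInt_continuous (V := R_CompleteNormedModule)); auto. Qed.

Lemma RInt_scal_R (f : R -> R) a b c : ex_RInt f a b ->
  RInt (fun x => c * f x) a b = c * RInt f a b.
Proof. intros H; exact (RInt_scal (V := R_CompleteNormedModule) f a b c H). Qed.

Lemma RInt_Chasles_R (f : R -> R) a b c : (forall x, continuous f x) ->
  RInt f a b + RInt f b c = RInt f a c.
Proof. intros H; apply (RInt_Chasles (V := R_CompleteNormedModule)); apply ex_RInt_cont; auto. Qed.

Lemma RInt_abs_le_const (f : R -> R) a b c : a <= b -> ex_RInt f a b ->
  (forall x, a < x < b -> Rabs (f x) <= c) -> Rabs (RInt f a b) <= c * (b - a).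
Proof.
  intros Hab Hex Hb. eapply Rle_trans; [apply abs_RInt_le; auto |].
  replace (c * (b - a)) with (RInt (fun _ => c) a b)
    by (rewrite RInt_const; unfold scal; simpl; unfold mult; simpl; ring).
  apply RInt_le; auto using ex_RInt_norm, ex_RInt_const.
Qed.

Lemma RInt_exp_decay_le lam c a b : 0 < lam -> c <= a <= b ->
  RInt (fun x => exp (- (lam * (x - c)))) a b <= / lam.
Proof.
  intros Hl Hab.
  rewrite (is_RInt_unique _ a b
    (minus (- / lam * exp (- (lam * (b - c)))) (- / lam * exp (- (lam * (a - c)))))).
  - unfold minus, plus, opp; simpl.
    assert (exp (- (lam * (a - c))) <= 1) by (apply exp_le_1; nra).
    pose proof (exp_pos (- (lam * (b - c)))).
    assert (0 < / lam) by (apply Rinv_0_lt_compat; lra). nra.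
  - apply (is_RInt_derive (fun x => - / lam * exp (- (lam * (x - c))))).
    + intros x _. auto_derive; auto. replace (x + - c) with (x - c) by ring. field. lra.
    + intros x _. apply (ex_derive_continuous (fun x => exp (- (lam * (x - c))))).
      auto_derive; auto.
Qed.

Definition RInt_tends (f : R -> R) (a L : R) : Prop :=
  forall eps, 0 < eps -> exists M, forall b, M <= b -> Rabs (RInt f a b - L) < eps.

(** A continuous nonnegative function dominated by [C exp (- t x)] on [[0, oo)] is
    improperly integrable: [b |-> int_0^b f] is nondecreasing and bounded by [C / t],
    so it converges to its supremum. *)
Lemma RInt_tends_exp_dominated (f : R -> R) C t : 0 < t ->
  (forall x, continuous f x) -> (forall x, 0 <= x -> 0 <= f x <= C * exp (- (t * x))) ->
  exists L, RInt_tends f 0 L.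
Proof.
  intros Ht Hc Hb.
  assert (HC : 0 <= C) by (destruct (Hb 0) as [H1 H2]; try lra; pose proof (exp_pos (- (t * 0))); nra).
  assert (Hexp : forall a b, ex_RInt (fun x => exp (- (t * (x - 0)))) a b).
  { intros a b; apply ex_RInt_cont; intros x.
    apply (ex_derive_continuous (fun x => exp (- (t * (x - 0))))); auto_derive; auto. }
  set (E := fun y => exists b, 0 <= b /\ y = RInt f 0 b).
  assert (Hmono : forall b1 b2, 0 <= b1 <= b2 -> RInt f 0 b1 <= RInt f 0 b2).
  { intros b1 b2 Hb12. rewrite <- (RInt_Chasles_R f 0 b1 b2 Hc).
    assert (0 <= RInt f b1 b2); [| lra].
    apply RInt_ge_0; [lra | apply ex_RInt_cont; auto |]. intros x Hx; apply Hb; lra. }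
  assert (Hbnd : bound E).
  { exists (C / t). intros y [b [Hb0 ->]].
    apply Rle_trans with (RInt (fun x => C * exp (- (t * (x - 0)))) 0 b).
    - apply RInt_le; auto using ex_RInt_cont.
      + apply (ex_RInt_scal (V := R_NormedModule) _ 0 b C), Hexp.
      + intros x Hx. rewrite Rminus_0_r. apply Hb; lra.
    - rewrite RInt_scal_R by apply Hexp. apply Rmult_le_compat_l; auto.
      apply RInt_exp_decay_le; lra. }
  destruct (completeness E Hbnd) as [L [HL1 HL2]]; [exists (RInt f 0 0), 0; split; lra |].
  exists L. intros eps Heps.
  assert (exists b0, 0 <= b0 /\ L - eps < RInt f 0 b0) as [b0 [Hb0 Hb0']].
  { apply Classical_Prop.NNPP. intros Hn.
    assert (Hub : is_upper_bound E (L - eps)).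
    { intros y [b [Hb' ->]]. apply Rnot_lt_le. intro. apply Hn. exists b; split; auto. }
    apply HL2 in Hub. lra. }
  exists b0. intros b Hbb.
  assert (RInt f 0 b <= L) by (apply HL1; exists b; split; lra).
  assert (RInt f 0 b0 <= RInt f 0 b) by (apply Hmono; lra).
  apply Rabs_def1; lra.
Qed.

Lemma RInt_tends_tail (f g : R -> R) c L : (forall x, continuous f x) ->
  (forall y, 1 <= y -> g y = c * f y) -> RInt_tends f 0 L ->
  RInt_tends g 1 (c * (L - RInt f 0 1)).
Proof.
  intros Hc Hg HL eps Heps.
  assert (Hc1 : 0 < Rabs c + 1) by (pose proof (Rabs_pos c); lra).
  destruct (HL (eps / (Rabs c + 1))) as [M HM]; [apply Rdiv_lt_0_compat; lra |].
  exists (Rmax M 1). intros b Hb.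
  pose proof (Rmax_l M 1); pose proof (Rmax_r M 1).
  rewrite (RInt_ext g (fun y => c * f y)).
  2:{ intros x Hx. rewrite Rmin_left in Hx by lra. apply Hg; lra. }
  rewrite RInt_scal_R by (apply ex_RInt_cont; auto).
  replace (c * RInt f 1 b - c * (L - RInt f 0 1)) with (c * (RInt f 0 1 + RInt f 1 b - L)) by ring.
  rewrite Rabs_mult.
  apply Rle_lt_trans with ((Rabs c + 1) * Rabs (RInt f 0 1 + RInt f 1 b - L)).
  - pose proof (Rabs_pos (RInt f 0 1 + RInt f 1 b - L)). nra.
  - assert (Hlt := HM b ltac:(lra)). rewrite <- (RInt_Chasles_R f 0 1 b Hc) in Hlt.
    apply (Rmult_lt_compat_l (Rabs c + 1)) in Hlt; [| lra].
    replace ((Rabs c + 1) * (eps / (Rabs c + 1))) with eps in Hlt by (field; lra). exact Hlt.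
Qed.

Lemma RInt_reflect_half (f : R -> R) Rr : (forall x, continuous f x) ->
  RInt f (- Rr) 0 = RInt (fun y => f (- y)) 0 Rr.
Proof.
  intros Hc.
  assert (H := RInt_comp_lin (V := R_CompleteNormedModule) f (-1) 0 0 Rr (ex_RInt_cont _ _ _ Hc)).
  replace (-1 * 0 + 0) with 0 in H by ring. replace (-1 * Rr + 0) with (- Rr) in H by ring.
  rewrite RInt_scal in H.
  2:{ apply ex_RInt_cont. intros x. apply (continuous_comp (fun y => -1 * y + 0) f); auto.
      apply (ex_derive_continuous (fun y => -1 * y + 0)). auto_derive; auto. }
  rewrite (RInt_ext (fun y => f (-1 * y + 0)) (fun y => f (- y))) in H
    by (intros x _; f_equal; ring).
  unfold scal in H; simpl in H; unfold mult in H; simpl in H.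
  rewrite <- opp_RInt_swap by (apply ex_RInt_cont; auto). rewrite <- H. unfold opp; simpl. ring.
Qed.

Lemma RInt_sym_even (f : R -> R) Rr : (forall x, continuous f x) ->
  (forall y, f (- y) = f y) -> RInt f (- Rr) Rr = 2 * RInt f 0 Rr.
Proof.
  intros Hc He. rewrite <- (RInt_Chasles_R f (- Rr) 0 Rr Hc), RInt_reflect_half by auto.
  rewrite (RInt_ext (fun y => f (- y)) f) by (intros; apply He). simpl; ring.
Qed.

Lemma RInt_sym_odd (f : R -> R) Rr : (forall x, continuous f x) ->
  (forall y, f (- y) = - f y) -> RInt f (- Rr) Rr = 0.
Proof.
  intros Hc Ho. rewrite <- (RInt_Chasles_R f (- Rr) 0 Rr Hc), RInt_reflect_half by auto.
  rewrite (RInt_ext (fun y => f (- y)) (fun y => -1 * f y)) by (intros x _; rewrite Ho; simpl; ring).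
  rewrite RInt_scal_R by (apply ex_RInt_cont; auto). simpl; ring.
Qed.

(** Bridges from Coquelicot's total integral [RInt] to the improper integrals of
    the statement, which are phrased with Stdlib's [RiemannInt]. *)
Lemma improper_int_from1_of_tends (f : R -> R) L :
  (forall y, 0 < y -> continuous f y) -> RInt_tends f 1 L -> improper_int_from1 f L.
Proof.
  intros Hc HL. split.
  - intros b Hb. constructor. apply ex_RInt_Reals_0, (ex_RInt_continuous (V := R_CompleteNormedModule)).
    intros z Hz. rewrite Rmin_left in Hz by lra. apply Hc; lra.
  - intros eps Heps. destruct (HL eps Heps) as [M HM]. exists M.
    intros b pr Hb. rewrite <- RInt_Reals. auto.
Qed.

Lemma sym_improper_int_even (f : R -> R) L : (forall x, continuous f x) ->
  (forall y, f (- y) = f y) -> RInt_tends f 0 L -> sym_improper_int f (2 * L).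
Proof.
  intros Hc He HL. split.
  - intros Rr _. constructor. apply ex_RInt_Reals_0, ex_RInt_cont, Hc.
  - intros eps Heps. destruct (HL (eps / 2)) as [M HM]; [lra |]. exists M.
    intros Rr pr HR. rewrite <- RInt_Reals, RInt_sym_even by auto.
    replace (2 * RInt f 0 Rr - 2 * L) with (2 * (RInt f 0 Rr - L)) by ring.
    rewrite Rabs_mult, Rabs_pos_eq by lra. specialize (HM Rr HR). lra.
Qed.

Lemma sym_improper_int_odd (f : R -> R) : (forall x, continuous f x) ->
  (forall y, f (- y) = - f y) -> sym_improper_int f 0.
Proof.
  intros Hc Ho. split.
  - intros Rr _. constructor. apply ex_RInt_Reals_0, ex_RInt_cont, Hc.
  - intros eps Heps. exists 0. intros Rr pr _.
    rewrite <- RInt_Reals, RInt_sym_odd, Rminus_0_r, Rabs_R0 by auto. exact Heps.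
Qed.

(** A function vanishing at [0] and dominated near [0] by [2 / |ln|y|/2 + k|] is
    continuous at [0], since [ln|y| -> -oo]. *)
Lemma continuous_at_0_log_decay (f : R -> R) k : f 0 = 0 ->
  (forall y, y <> 0 -> 0 < Rabs (/ 2 * ln (Rabs y) + k) ->
     Rabs (f y) <= 2 / Rabs (/ 2 * ln (Rabs y) + k)) ->
  continuous f 0.
Proof.
  intros H0 Hb. apply continuity_pt_filterlim. intros eps Heps.
  set (M := - (2 / eps) - Rabs k - 1).
  assert (Heps2 : 0 < 2 / eps) by (apply Rdiv_lt_0_compat; lra).
  exists (exp (2 * M)). split; [apply exp_pos |].
  intros y [_ Hy]. simpl in *. unfold R_dist in *. rewrite H0, Rminus_0_r in *.
  destruct (Req_dec y 0) as [-> | Hy0]; [rewrite H0, Rabs_R0; lra |].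
  assert (Hln : ln (Rabs y) < 2 * M).
  { rewrite <- (ln_exp (2 * M)). apply ln_increasing; auto using Rabs_pos_lt. }
  pose proof (RRle_abs k).
  assert (Ha : Rabs (/ 2 * ln (Rabs y) + k) = - (/ 2 * ln (Rabs y) + k))
    by (apply Rabs_left; unfold M in Hln; lra).
  eapply Rle_lt_trans; [apply Hb; auto; rewrite Ha; unfold M in Hln; lra |].
  rewrite Ha. apply (Rmult_lt_reg_r (- (/ 2 * ln (Rabs y) + k))); [unfold M in Hln; lra |].
  unfold Rdiv. rewrite Rmult_assoc, Rinv_l by (unfold M in Hln; lra).
  apply (Rmult_lt_reg_l (/ eps)); [apply Rinv_0_lt_compat; lra |].
  replace (/ eps * (eps * - (/ 2 * ln (Rabs y) + k))) with (- (/ 2 * ln (Rabs y) + k))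
    by (field; lra).
  unfold M in Hln. unfold Rdiv in Heps2. lra.
Qed.

Lemma continuous_of_pieces (f h : R -> R) s :
  continuous f 0 -> (forall y, f (- y) = s * f y) ->
  (forall y, 0 < y -> f y = h y) -> (forall y, 0 < y -> ex_derive h y) ->
  forall y, continuous f y.
Proof.
  intros H0 Hs Hh Hd.
  assert (Hpos : forall y, 0 < y -> continuous f y).
  { intros y Hy. apply continuous_ext_loc with (2 := ex_derive_continuous _ _ (Hd y Hy)).
    apply (filter_imp (fun x => 0 < x)); [intros x Hx; symmetry; auto | apply (open_gt 0 y Hy)]. }
  intros y. destruct (Rtotal_order y 0) as [Hn | [-> | Hp]]; auto.
  apply (continuous_ext (fun x => s * f (- x))).
  - intros x. rewrite <- Hs, Ropp_involutive. reflexivity.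
  - apply (continuous_mult (fun _ => s) (fun x => f (- x))); [apply continuous_const |].
    apply (continuous_comp (fun x => - x) f).
    + apply (ex_derive_continuous (fun x => - x)). auto_derive; auto.
    + apply Hpos; lra.
Qed.

Lemma sgn_pos y : 0 < y -> sgn y = 1.
Proof. intros; unfold sgn; destruct (Rlt_dec 0 y); lra. Qed.

Lemma sgn_neg y : y < 0 -> sgn y = -1.
Proof. intros; unfold sgn; destruct (Rlt_dec 0 y); try lra; destruct (Rlt_dec y 0); lra. Qed.

Lemma sgn_opp y : sgn (- y) = - sgn y.
Proof.
  destruct (Rtotal_order y 0) as [H | [-> | H]].
  - rewrite sgn_pos, sgn_neg by lra. ring.
  - rewrite Ropp_0; unfold sgn; destruct (Rlt_dec 0 0); [lra |]; destruct (Rlt_dec 0 0); lra.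
  - rewrite sgn_neg, sgn_pos by lra. ring.
Qed.

Lemma Rabs_sgn_PI4 y : y <> 0 -> Rabs (PI / 4 * sgn y) = PI / 4.
Proof.
  intros Hy. pose proof PI_RGT_0. destruct (Rtotal_order y 0) as [Hn | [Hz | Hp]]; [| lra |].
  - rewrite sgn_neg, Rabs_left by lra. ring.
  - rewrite sgn_pos, Rmult_1_r, Rabs_pos_eq by lra. reflexivity.
Qed.

Lemma Kint_re_cquot k t y : y <> 0 -> Kint_re k t y =
  cquot (/ 2 * ln (Rabs y) + k) (PI / 4 * sgn y) (cos (t * y)) (sin (t * y)).
Proof.
  intros Hy. unfold Kint_re, cquot. destruct (Req_EM_T y 0); [lra |]. f_equal; ring.
Qed.

Lemma Kint_im_cquot k t y : y <> 0 -> Kint_im k t y =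
  cquot (/ 2 * ln (Rabs y) + k) (PI / 4 * sgn y) (sin (t * y)) (- cos (t * y)).
Proof.
  intros Hy. unfold Kint_im, cquot. destruct (Req_EM_T y 0); [lra |]. f_equal; ring.
Qed.

Lemma Kint_re_even k t y : Kint_re k t (- y) = Kint_re k t y.
Proof.
  destruct (Req_dec y 0) as [-> | Hy]; [rewrite Ropp_0; reflexivity |].
  rewrite !Kint_re_cquot, Rabs_Ropp, sgn_opp by lra.
  replace (t * - y) with (- (t * y)) by ring. rewrite cos_neg, sin_neg.
  unfold cquot; f_equal; ring.
Qed.

Lemma Kint_im_odd k t y : Kint_im k t (- y) = - Kint_im k t y.
Proof.
  destruct (Req_dec y 0) as [-> | Hy].
  - rewrite Ropp_0. unfold Kint_im. destruct (Req_EM_T 0 0); [ring | lra].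
  - rewrite !Kint_im_cquot, Rabs_Ropp, sgn_opp by lra.
    replace (t * - y) with (- (t * y)) by ring. rewrite cos_neg, sin_neg.
    unfold cquot. replace ((PI / 4 * - sgn y) ^ 2) with ((PI / 4 * sgn y) ^ 2) by ring.
    unfold Rdiv; ring.
Qed.

Lemma Kint_re_bound k t y : Rabs (Kint_re k t y) <= 4.
Proof.
  destruct (Req_dec y 0) as [-> | Hy].
  - unfold Kint_re. destruct (Req_EM_T 0 0); [rewrite Rabs_R0; lra | lra].
  - rewrite Kint_re_cquot by auto. pose proof PI_gt_2.
    eapply Rle_trans; [apply cquot_bound_im; auto using COS_bound, SIN_bound |];
      rewrite Rabs_sgn_PI4 by auto; [lra |].
    apply div_le_of_le_mul; lra.
Qed.

Lemma Kint_re_continuous k t y : continuous (Kint_re k t) y.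
Proof.
  pose proof PI_RGT_0.
  apply (continuous_of_pieces _ (fun y => cquot (/ 2 * ln y + k) (PI / 4) (cos (t * y)) (sin (t * y))) 1).
  - apply (continuous_at_0_log_decay _ k).
    + unfold Kint_re. destruct (Req_EM_T 0 0); [reflexivity | lra].
    + intros x Hx Ha. rewrite Kint_re_cquot by auto.
      apply cquot_bound_re; auto using COS_bound, SIN_bound.
  - intros x. rewrite Kint_re_even. ring.
  - intros x Hx. rewrite Kint_re_cquot, sgn_pos, Rabs_pos_eq by lra. rewrite Rmult_1_r. reflexivity.
  - intros x Hx. assert (Hd := sum_sq_pos (/ 2 * ln x + k) (PI / 4) ltac:(lra)).
    unfold cquot. auto_derive. repeat split; lra.
Qed.

Lemma Kint_im_continuous k t y : continuous (Kint_im k t) y.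
Proof.
  pose proof PI_RGT_0.
  apply (continuous_of_pieces _ (fun y => cquot (/ 2 * ln y + k) (PI / 4) (sin (t * y)) (- cos (t * y))) (-1)).
  - apply (continuous_at_0_log_decay _ k).
    + unfold Kint_im. destruct (Req_EM_T 0 0); [reflexivity | lra].
    + intros x Hx Ha. rewrite Kint_im_cquot by auto. pose proof (COS_bound (t * x)).
      apply cquot_bound_re; auto using SIN_bound; lra.
  - intros x. rewrite Kint_im_odd. ring.
  - intros x Hx. rewrite Kint_im_cquot, sgn_pos, Rabs_pos_eq by lra. rewrite Rmult_1_r. reflexivity.
  - intros x Hx. assert (Hd := sum_sq_pos (/ 2 * ln x + k) (PI / 4) ltac:(lra)).
    unfold cquot. auto_derive. repeat split; lra.
Qed.

(** On the cut [z = - r] the imaginary part of [- exp (- t r) / (ln sqrt r + k + i PI/2)]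
    is [PI exp (- t r) log_weight k r], where [log_weight k r = 2 / ((ln r + 2 k) ^ 2 + PI ^ 2)]
    (extended evenly, and by its limit [0] at [r = 0]). *)
Definition log_weight (k y : R) : R :=
  if Req_EM_T y 0 then 0 else / 2 / ((/ 2 * ln (Rabs y) + k) ^ 2 + (PI / 2) ^ 2).

Lemma log_weight_range k y : 0 <= log_weight k y <= 1.
Proof.
  unfold log_weight. destruct (Req_EM_T y 0); [lra |].
  pose proof PI_gt_2. pose proof (pow2_ge_0 (/ 2 * ln (Rabs y) + k)).
  assert (1 < (PI / 2) ^ 2) by (simpl; nra).
  split; [apply Rdiv_le_0_compat; lra | apply div_le_of_le_mul; lra].
Qed.

Lemma log_weight_continuous k y : continuous (log_weight k) y.
Proof.
  pose proof PI_gt_2.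
  apply (continuous_of_pieces _ (fun y => / 2 / ((/ 2 * ln y + k) ^ 2 + (PI / 2) ^ 2)) 1).
  - apply (continuous_at_0_log_decay _ k).
    + unfold log_weight. destruct (Req_EM_T 0 0); [reflexivity | lra].
    + intros x Hx Ha. pose proof (log_weight_range k x) as Hr. unfold log_weight in *.
      destruct (Req_EM_T x 0); [lra |]. rewrite Rabs_pos_eq by lra.
      rewrite <- pow2_abs. set (A := Rabs (/ 2 * ln (Rabs x) + k)) in *.
      assert (1 < (PI / 2) ^ 2) by (simpl; nra).
      apply div_le_div; [simpl in *; nra | lra | simpl in *; nra].
  - intros x. unfold log_weight. rewrite Rabs_Ropp.
    destruct (Req_EM_T (- x) 0), (Req_EM_T x 0); try lra; ring.
  - intros x Hx. unfold log_weight. destruct (Req_EM_T x 0); [lra |].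
    rewrite Rabs_pos_eq by lra. reflexivity.
  - intros x Hx. assert (Hd := sum_sq_pos (/ 2 * ln x + k) (PI / 2) ltac:(lra)).
    auto_derive. repeat split; lra.
Qed.

(** * Cauchy's theorem on the sector [PI/2 <= arg z <= PI], in polar coordinates

    With [f z = exp (t z) / (ln sqrt z + k)] and [z = r e^(i p)], [ray_re] and [ray_im]
    are the real and imaginary parts of [e^(i p) f (r e^(i p))].  Holomorphy of [f]
    gives [d/dp ray_im = d/dr (r ray_re)], the common value being [ray_cr]. *)

Definition ray_log (k r : R) : R := / 2 * ln r + k.
Definition ray_phase (t p r : R) : R := t * r * sin p + p.

Definition ray_re (k t p r : R) : R :=
  exp (t * r * cos p) * cquot (ray_log k r) (p / 2) (cos (ray_phase t p r)) (sin (ray_phase t p r)).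
Definition ray_im (k t p r : R) : R :=
  exp (t * r * cos p) * cquot (ray_log k r) (p / 2) (sin (ray_phase t p r)) (- cos (ray_phase t p r)).

Definition ray_cr (k t p r : R) : R :=
  let U := ray_log k r in let th := ray_phase t p r in let N := U ^ 2 + (p / 2) ^ 2 in
  exp (t * r * cos p) * (- (t * r * sin p) * (U * sin th - p / 2 * cos th)
     + (U * cos th + p / 2 * sin th) * (t * r * cos p + 1) - cos th / 2) / N
  - exp (t * r * cos p) * (p / 2) * (U * sin th - p / 2 * cos th) / N ^ 2.

Lemma ray_den_pos k r p : 0 < p -> 0 < ray_log k r ^ 2 + (p / 2) ^ 2.
Proof. intros; apply sum_sq_pos; lra. Qed.

Lemma ray_im_derive_angle k t p r : 0 < p ->
  is_derive (fun q => ray_im k t q r) p (ray_cr k t p r).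
Proof.
  intros Hp. pose proof (ray_den_pos k r p Hp).
  unfold ray_im, ray_cr, cquot, ray_phase, ray_log in *. auto_derive; [lra |]. field. lra.
Qed.

Lemma ray_re_derive_radius k t p r : 0 < p -> 0 < r ->
  is_derive (fun s => s * ray_re k t p s) r (ray_cr k t p r).
Proof.
  intros Hp Hr. pose proof (ray_den_pos k r p Hp).
  unfold ray_re, ray_cr, cquot, ray_phase, ray_log in *. auto_derive; [repeat split; lra |].
  field. lra.
Qed.

Lemma ray_cr_continuous k t p r : 0 < p -> 0 < r ->
  continuous (fun q : R * R => ray_cr k t (fst q) (snd q)) (p, r).
Proof.
  intros Hp Hr. pose proof (ray_den_pos k r p Hp).
  unfold ray_cr, ray_phase, ray_log in *. cont2; simpl in *; try lra.
  apply Rgt_not_eq. nra.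
Qed.

Lemma ray_im_continuous_radius k t p r : 0 < p -> 0 < r ->
  continuous (fun s => ray_im k t p s) r.
Proof.
  intros Hp Hr. pose proof (ray_den_pos k r p Hp).
  apply (ex_derive_continuous (fun s => ray_im k t p s)).
  unfold ray_im, cquot, ray_phase, ray_log in *. auto_derive. repeat split; lra.
Qed.

Lemma ray_re_continuous_angle k t p r : 0 < p -> continuous (fun q => ray_re k t q r) p.
Proof.
  intros Hp. pose proof (ray_den_pos k r p Hp).
  apply (ex_derive_continuous (fun q => ray_re k t q r)).
  unfold ray_re, cquot, ray_phase, ray_log in *. auto_derive. lra.
Qed.

(** The arc integrand: the [p]-derivative of [int_eps^R ray_im (p, r) dr]. *)
Definition arc_integrand (k t eps Rr p : R) : R :=
  Rr * ray_re k t p Rr - eps * ray_re k t p eps.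

Lemma arc_integrand_continuous k t eps Rr p : 0 < p ->
  continuous (arc_integrand k t eps Rr) p.
Proof.
  intros Hp. unfold arc_integrand.
  apply (continuous_minus (fun q => Rr * ray_re k t q Rr) (fun q => eps * ray_re k t q eps));
    apply (continuous_mult (fun _ => _) (fun q => ray_re k t q _));
    auto using continuous_const, ray_re_continuous_angle.
Qed.

(** Differentiation under the integral sign, then the Cauchy–Riemann identity and the
    fundamental theorem of calculus in [r]. *)
Lemma ray_integral_derive_angle k t eps Rr p : 0 < eps < Rr -> 0 < p ->
  is_derive (fun q => RInt (fun r => ray_im k t q r) eps Rr) p (arc_integrand k t eps Rr p).
Proof.
  intros He Hp.
  assert (Hsub : forall x, Rmin eps Rr <= x <= Rmax eps Rr -> 0 < x)
    by (intros x Hx; rewrite Rmin_left in Hx by lra; lra).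
  assert (E : arc_integrand k t eps Rr p =
              RInt (fun r => Derive (fun q => ray_im k t q r) p) eps Rr).
  { rewrite (RInt_ext _ (ray_cr k t p)).
    2:{ intros x Hx. rewrite Rmin_left in Hx by lra.
        apply is_derive_unique, ray_im_derive_angle; auto. }
    symmetry. apply is_RInt_unique.
    apply (is_RInt_derive (fun r => r * ray_re k t p r) (ray_cr k t p)).
    - intros x Hx. apply ray_re_derive_radius; auto.
    - intros x Hx. apply (continuous_comp_2 (fun _ => p) (fun r => r) (ray_cr k t));
        auto using continuous_const, continuous_id, ray_cr_continuous. }
  rewrite E. apply (is_derive_RInt_param (fun q r => ray_im k t q r)).
  - apply (filter_imp (fun x => 0 < x)); [| apply (open_gt 0 p Hp)].
    intros x Hx r Hr. eexists. apply ray_im_derive_angle; auto.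
  - intros r Hr. apply continuity_2d_pt_filterlim.
    change (continuous (fun z : R * R => Derive (fun u => ray_im k t u (snd z)) (fst z)) (p, r)).
    apply (continuous_ext_loc _ (fun q : R * R => ray_cr k t (fst q) (snd q)));
      [| apply ray_cr_continuous; auto].
    assert (L1 : locally (p, r) (fun z : R * R => 0 < fst z))
      by (apply (continuous_fst p r), (open_gt 0 p Hp)).
    assert (L2 : locally (p, r) (fun z : R * R => 0 < snd z))
      by (apply (continuous_snd p r), (open_gt 0 r (Hsub r Hr))).
    generalize (filter_and _ _ L1 L2). apply filter_imp.
    intros [a b] [Ha Hb]; simpl in *. symmetry. apply is_derive_unique, ray_im_derive_angle; auto.
  - apply (filter_imp (fun x => 0 < x)); [| apply (open_gt 0 p Hp)].
    intros x Hx. apply (ex_RInt_continuous (V := R_CompleteNormedModule)).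
    intros z Hz. apply ray_im_continuous_radius; auto.
Qed.

(** Cauchy's theorem for the annular sector [eps <= |z| <= R], [PI/2 <= arg z <= PI]. *)
Lemma contour_identity k t eps Rr : 0 < eps < Rr ->
  RInt (fun r => ray_im k t PI r) eps Rr - RInt (fun r => ray_im k t (PI / 2) r) eps Rr =
  RInt (arc_integrand k t eps Rr) (PI / 2) PI.
Proof.
  intros He. symmetry. apply is_RInt_unique. pose proof PI_RGT_0.
  apply (is_RInt_derive (fun p => RInt (fun r => ray_im k t p r) eps Rr));
    intros x Hx; rewrite Rmin_left in Hx by lra.
  - apply ray_integral_derive_angle; lra.
  - apply arc_integrand_continuous; lra.
Qed.

Lemma ray_re_bound_log k t p r : 0 < Rabs (ray_log k r) ->
  Rabs (ray_re k t p r) <= exp (t * r * cos p) * (2 / Rabs (ray_log k r)).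
Proof.
  intros Hu. unfold ray_re. rewrite Rabs_mult, Rabs_pos_eq by (left; apply exp_pos).
  apply Rmult_le_compat_l; [left; apply exp_pos |].
  apply cquot_bound_re; auto using COS_bound, SIN_bound.
Qed.

Lemma ray_re_bound_angle k t p r : 0 < p ->
  Rabs (ray_re k t p r) <= exp (t * r * cos p) * (4 / p).
Proof.
  intros Hp. unfold ray_re. rewrite Rabs_mult, Rabs_pos_eq by (left; apply exp_pos).
  apply Rmult_le_compat_l; [left; apply exp_pos |].
  replace (4 / p) with (2 / Rabs (p / 2)) by (rewrite Rabs_pos_eq by lra; field; lra).
  apply cquot_bound_im; auto using COS_bound, SIN_bound. rewrite Rabs_pos_eq; lra.
Qed.

(** Jordan-type bound: on the big arc [exp (t R cos p)] decays like
    [exp (- t R (p - PI/2) / 4)], while on the small arc everything is [O(eps)]. *)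
Lemma arc_integrand_bound k t eps Rr p : 0 < t -> 0 < eps < Rr ->
  0 < Rabs (ray_log k Rr) -> PI / 2 <= p <= PI ->
  Rabs (arc_integrand k t eps Rr p) <=
  2 * Rr / Rabs (ray_log k Rr) * exp (- (t * Rr / 4 * (p - PI / 2))) + 4 * eps.
Proof.
  intros Ht He Hu Hp. pose proof PI_gt_2. unfold arc_integrand. unfold Rminus at 1.
  eapply Rle_trans; [apply Rabs_triang |].
  rewrite Rabs_Ropp, !Rabs_mult, (Rabs_pos_eq Rr), (Rabs_pos_eq eps) by lra.
  apply Rplus_le_compat.
  - assert (Hexp : exp (t * Rr * cos p) <= exp (- (t * Rr / 4 * (p - PI / 2)))).
    { apply exp_mono. pose proof (cos_jordan p Hp). assert (0 < t * Rr) by nra. nra. }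
    assert (H2u : 0 < 2 / Rabs (ray_log k Rr)) by (apply Rdiv_lt_0_compat; lra).
    replace (2 * Rr / Rabs (ray_log k Rr) * exp (- (t * Rr / 4 * (p - PI / 2))))
      with (Rr * (exp (- (t * Rr / 4 * (p - PI / 2))) * (2 / Rabs (ray_log k Rr)))) by (field; lra).
    apply Rmult_le_compat_l; [lra |].
    eapply Rle_trans; [apply ray_re_bound_log; auto |]. apply Rmult_le_compat_r; lra.
  - rewrite Rmult_comm. apply Rmult_le_compat_r; [lra |].
    eapply Rle_trans; [apply ray_re_bound_angle; lra |].
    assert (exp (t * eps * cos p) <= 1).
    { apply exp_le_1. assert (cos p <= 0) by (apply cos_le_0; lra). assert (0 < t * eps) by nra. nra. }
    assert (4 / p <= 4) by (apply div_le_of_le_mul; lra).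
    assert (0 <= 4 / p) by (apply Rdiv_le_0_compat; lra).
    pose proof (exp_pos (t * eps * cos p)). nra.
Qed.

Lemma arc_integral_bound k t eps Rr : 0 < t -> 0 < eps < Rr -> 0 < Rabs (ray_log k Rr) ->
  Rabs (RInt (arc_integrand k t eps Rr) (PI / 2) PI) <= 8 / (t * Rabs (ray_log k Rr)) + 8 * eps.
Proof.
  intros Ht He Hu. pose proof PI_gt_2. pose proof PI_4.
  set (u := Rabs (ray_log k Rr)) in *.
  set (lam := t * Rr / 4). assert (Hlam : 0 < lam) by (unfold lam; nra).
  set (e := fun p => exp (- (lam * (p - PI / 2)))).
  assert (Hec : forall p, continuous e p).
  { intros p. apply (ex_derive_continuous e). unfold e. auto_derive. auto. }
  assert (Hex : ex_RInt (arc_integrand k t eps Rr) (PI / 2) PI).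
  { apply (ex_RInt_continuous (V := R_CompleteNormedModule)). intros z Hz.
    rewrite Rmin_left in Hz by lra. apply arc_integrand_continuous. lra. }
  assert (Hg : ex_RInt (fun p => 2 * Rr / u * e p) (PI / 2) PI)
    by (apply (ex_RInt_scal (V := R_NormedModule) e), ex_RInt_cont; auto).
  eapply Rle_trans; [apply abs_RInt_le; [lra | auto] |].
  eapply Rle_trans.
  { apply (RInt_le _ (fun p => 2 * Rr / u * e p + 4 * eps)); [lra | apply ex_RInt_norm; auto | |].
    - apply (ex_RInt_plus (V := R_NormedModule)); auto using ex_RInt_const.
    - intros p Hp. apply arc_integrand_bound; auto; lra. }
  rewrite (RInt_plus (V := R_CompleteNormedModule)) by auto using ex_RInt_const.
  rewrite RInt_const, RInt_scal_R by (apply ex_RInt_cont; auto).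
  unfold plus, scal; simpl; unfold mult; simpl.
  assert (He1 : RInt e (PI / 2) PI <= / lam) by (apply RInt_exp_decay_le; lra).
  assert (E : 2 * Rr / u * / lam = 8 / (t * u)) by (unfold lam; field; lra).
  assert (0 < 2 * Rr / u) by (apply Rdiv_lt_0_compat; lra).
  assert (2 * Rr / u * RInt e (PI / 2) PI <= 2 * Rr / u * / lam) by (apply Rmult_le_compat_l; lra).
  nra.
Qed.

(** * Rotating the imaginary half-axis onto the cut *)

Definition cut_density (k t r : R) : R := PI * (exp (- (t * r)) * log_weight k r).

Lemma ray_im_at_PI2 k t r : 0 < r -> ray_im k t (PI / 2) r = Kint_re k t r.
Proof.
  intros Hr. rewrite Kint_re_cquot, sgn_pos, Rabs_pos_eq by lra.
  unfold ray_im, ray_phase, ray_log.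
  rewrite cos_PI2, sin_PI2, Rmult_0_r, exp_0, Rmult_1_l, Rmult_1_r, sin_plus, cos_plus, cos_PI2, sin_PI2.
  unfold cquot. replace (PI / 2 / 2) with (PI / 4 * 1) by field. f_equal; ring.
Qed.

Lemma ray_im_at_PI k t r : 0 < r -> ray_im k t PI r = cut_density k t r.
Proof.
  intros Hr. pose proof (ray_den_pos k r PI PI_RGT_0).
  unfold ray_im, ray_phase, cut_density, log_weight, cquot, ray_log in *.
  destruct (Req_EM_T r 0); [lra |]. rewrite Rabs_pos_eq by lra.
  rewrite cos_PI, sin_PI, Rmult_0_r, Rplus_0_l, cos_PI, sin_PI.
  replace (t * r * -1) with (- (t * r)) by ring. field. lra.
Qed.

Lemma cut_density_continuous k t r : continuous (cut_density k t) r.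
Proof.
  unfold cut_density. apply (continuous_mult (fun _ => PI) (fun r => exp (- (t * r)) * log_weight k r));
    [apply continuous_const |].
  apply (continuous_mult (fun r => exp (- (t * r))) (log_weight k)); [| apply log_weight_continuous].
  apply (ex_derive_continuous (fun r => exp (- (t * r)))). auto_derive; auto.
Qed.

Lemma cut_density_range k t r : 0 <= cut_density k t r <= PI * exp (- (t * r)).
Proof.
  unfold cut_density. pose proof (log_weight_range k r). pose proof (exp_pos (- (t * r))).
  pose proof PI_RGT_0. split; [apply Rmult_le_pos; [lra | apply Rmult_le_pos; lra] |].
  apply Rmult_le_compat_l; [lra | nra].
Qed.

Lemma cut_density_bound k t r : 0 <= t -> 0 <= r -> Rabs (cut_density k t r) <= 4.
Proof.
  intros Ht Hr. pose proof (cut_density_range k t r). pose proof PI_4.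
  assert (exp (- (t * r)) <= 1) by (apply exp_le_1; nra). pose proof PI_RGT_0.
  rewrite Rabs_pos_eq by lra. nra.
Qed.

(** Up to the arcs, [int_0^R Kint_re] and [int_0^R cut_density] coincide:
    their difference is the arc integral plus two pieces of length [eps]. *)
Lemma ray_integrals_close_eps k t Rr eps : 0 < t -> 0 < eps < Rr -> 0 < Rabs (ray_log k Rr) ->
  Rabs (RInt (Kint_re k t) 0 Rr - RInt (cut_density k t) 0 Rr)
  <= 8 / (t * Rabs (ray_log k Rr)) + 16 * eps.
Proof.
  intros Ht He Hu.
  rewrite <- (RInt_Chasles_R (Kint_re k t) 0 eps Rr (Kint_re_continuous k t)).
  rewrite <- (RInt_Chasles_R (cut_density k t) 0 eps Rr (cut_density_continuous k t)).
  assert (Hc := contour_identity k t eps Rr He).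
  rewrite (RInt_ext (fun r => ray_im k t PI r) (cut_density k t)) in Hc
    by (intros x Hx; rewrite Rmin_left in Hx by lra; apply ray_im_at_PI; lra).
  rewrite (RInt_ext (fun r => ray_im k t (PI / 2) r) (Kint_re k t)) in Hc
    by (intros x Hx; rewrite Rmin_left in Hx by lra; apply ray_im_at_PI2; lra).
  assert (Harc := arc_integral_bound k t eps Rr Ht He Hu).
  assert (H1 : Rabs (RInt (Kint_re k t) 0 eps) <= 4 * (eps - 0))
    by (apply RInt_abs_le_const; [lra | apply ex_RInt_cont, Kint_re_continuous |];
        intros; apply Kint_re_bound).
  assert (H2 : Rabs (RInt (cut_density k t) 0 eps) <= 4 * (eps - 0))
    by (apply RInt_abs_le_const; [lra | apply ex_RInt_cont, cut_density_continuous |];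
        intros; apply cut_density_bound; lra).
  set (arc := RInt (arc_integrand k t eps Rr) (PI / 2) PI) in *.
  set (a1 := RInt (Kint_re k t) 0 eps) in *. set (b1 := RInt (cut_density k t) 0 eps) in *.
  replace (a1 + RInt (Kint_re k t) eps Rr - (b1 + RInt (cut_density k t) eps Rr))
    with (a1 + - b1 + - arc) by lra.
  pose proof (Rabs_triang (a1 + - b1) (- arc)). pose proof (Rabs_triang a1 (- b1)).
  rewrite Rabs_Ropp in *. lra.
Qed.

Lemma ray_integrals_close k t Rr : 0 < t -> 0 < Rr -> 0 < Rabs (ray_log k Rr) ->
  Rabs (RInt (Kint_re k t) 0 Rr - RInt (cut_density k t) 0 Rr) <= 8 / (t * Rabs (ray_log k Rr)).
Proof.
  intros Ht HR Hu. apply Rle_plus_epsilon. intros e He.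
  set (eps := Rmin (Rr / 2) (e / 16)).
  assert (0 < eps) by (apply Rmin_pos; lra).
  assert (eps <= Rr / 2) by apply Rmin_l. assert (eps <= e / 16) by apply Rmin_r.
  pose proof (ray_integrals_close_eps k t Rr eps Ht ltac:(lra) Hu). lra.
Qed.

Lemma ray_log_large k G : exists M, 0 < M /\ forall Rr, M <= Rr -> G <= ray_log k Rr.
Proof.
  exists (exp (2 * (G - k))). split; [apply exp_pos |]. intros Rr HR.
  assert (2 * (G - k) <= ln Rr); [| unfold ray_log; lra].
  rewrite <- (ln_exp (2 * (G - k))). destruct HR as [HR | <-]; [| lra].
  left. apply ln_increasing; auto using exp_pos.
Qed.

(** The half-line integral of [Kint_re] converges to that of [cut_density]: the
    discrepancy [8 / (t |ln sqrt R + k|)] of [ray_integrals_close] tends to [0]. *)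
Lemma Kint_re_tends k t L : 0 < t ->
  RInt_tends (cut_density k t) 0 L -> RInt_tends (Kint_re k t) 0 L.
Proof.
  intros Ht HL eps Heps.
  destruct (HL (eps / 2)) as [M1 HM1]; [lra |].
  destruct (ray_log_large k (16 / (t * eps) + 1)) as [M2 [HM2 HM2']].
  exists (Rmax M1 M2). intros Rr HR.
  pose proof (Rmax_l M1 M2); pose proof (Rmax_r M1 M2).
  assert (Hpos : 0 < 16 / (t * eps)) by (apply Rdiv_lt_0_compat; nra).
  assert (Hg := HM2' Rr ltac:(lra)).
  assert (Hu : Rabs (ray_log k Rr) = ray_log k Rr) by (apply Rabs_pos_eq; lra).
  assert (Hclose := ray_integrals_close k t Rr Ht ltac:(lra) ltac:(rewrite Hu; lra)).
  assert (Hsmall : 8 / (t * Rabs (ray_log k Rr)) <= eps / 2).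
  { rewrite Hu. apply div_le_of_le_mul; [nra |].
    assert (E : t * eps * (16 / (t * eps)) = 16) by (field; lra).
    assert (t * eps * ray_log k Rr >= t * eps * (16 / (t * eps))) by (apply Rle_ge, Rmult_le_compat_l; nra).
    nra. }
  specialize (HM1 Rr ltac:(lra)).
  pose proof (Rabs_triang (RInt (Kint_re k t) 0 Rr - RInt (cut_density k t) 0 Rr)
                          (RInt (cut_density k t) 0 Rr - L)).
  replace (RInt (Kint_re k t) 0 Rr - L) with
    (RInt (Kint_re k t) 0 Rr - RInt (cut_density k t) 0 Rr + (RInt (cut_density k t) 0 Rr - L)) by ring.
  lra.
Qed.

(** * The smooth part [K1 t = int_0^1 exp (- t r) log_weight k r dr]

    [K1_deriv k n] is its [n]-th derivative, obtained by differentiating under the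
    integral sign. *)
Definition K1_deriv (k : R) (n : nat) (t : R) : R :=
  RInt (fun r => (- r) ^ n * exp (- (t * r)) * log_weight k r) 0 1.

Lemma K1_integrand_continuous k n t x :
  continuous (fun r => (- r) ^ n * exp (- (t * r)) * log_weight k r) x.
Proof.
  apply (continuous_mult (fun r => (- r) ^ n * exp (- (t * r))) (log_weight k));
    [| apply log_weight_continuous].
  apply (ex_derive_continuous (fun r => (- r) ^ n * exp (- (t * r)))). auto_derive; auto.
Qed.

Lemma K1_deriv_is_derive k n t : is_derive (K1_deriv k n) t (K1_deriv k (S n) t).
Proof.
  assert (Hd : forall u r, is_derive (fun u => (- r) ^ n * exp (- (u * r)) * log_weight k r) u
                                     ((- r) ^ S n * exp (- (u * r)) * log_weight k r))
    by (intros; auto_derive; auto; simpl; ring).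
  unfold K1_deriv.
  rewrite (RInt_ext (fun r => (- r) ^ S n * exp (- (t * r)) * log_weight k r)
             (fun r => Derive (fun u => (- r) ^ n * exp (- (u * r)) * log_weight k r) t))
    by (intros x _; symmetry; apply is_derive_unique, Hd).
  apply (is_derive_RInt_param (fun u r => (- r) ^ n * exp (- (u * r)) * log_weight k r)).
  - apply filter_forall. intros x r _. eexists; apply Hd.
  - intros r _. apply continuity_2d_pt_filterlim.
    apply (continuous_ext (fun q : R * R => (- snd q) ^ S n * exp (- (fst q * snd q)) * log_weight k (snd q))).
    + intros q. symmetry. apply is_derive_unique, Hd.
    + cont2. apply (cont2_comp (fun q => snd q) (log_weight k)); [apply continuous_snd |].
      apply log_weight_continuous.
  - apply filter_forall. intros x. apply ex_RInt_cont, K1_integrand_continuous.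
Qed.

Lemma K1_smooth k : smooth_on_nonneg (K1_deriv k 0).
Proof.
  exists (K1_deriv k). split; [reflexivity |]. intros n. split.
  - intros x _. apply is_derive_Reals, K1_deriv_is_derive.
  - intros eps Heps. pose proof (K1_deriv_is_derive k n 0) as H. apply is_derive_Reals in H.
    destruct (H eps Heps) as [del Hdel]. exists del. split; [apply cond_pos |].
    intros h Hh. replace h with (0 + h) at 1 by ring. apply Hdel; [lra |].
    rewrite Rabs_pos_eq; lra.
Qed.

Lemma K1_bounded k : bounded_on_nonneg (K1_deriv k 0).
Proof.
  exists 1. intros t Ht. unfold K1_deriv. replace 1 with (1 * (1 - 0)) at 2 by ring.
  apply RInt_abs_le_const; [lra | apply ex_RInt_cont, K1_integrand_continuous |].
  intros x Hx. simpl. rewrite Rmult_1_l. pose proof (log_weight_range k x).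
  assert (exp (- (t * x)) <= 1) by (apply exp_le_1; nra). pose proof (exp_pos (- (t * x))).
  rewrite Rabs_pos_eq by nra. nra.
Qed.

Lemma cut_density_01 k t : RInt (cut_density k t) 0 1 = PI * K1_deriv k 0 t.
Proof.
  unfold K1_deriv. rewrite <- RInt_scal_R by (apply ex_RInt_cont, K1_integrand_continuous).
  apply RInt_ext. intros x _. unfold cut_density. simpl. ring.
Qed.

Lemma tail_integral_im k t L : RInt_tends (cut_density k t) 0 L ->
  improper_int_from1 (fun y => exp (- (t * y)) * Cinv_im (/ 2 * ln y + k) (PI / 2))
                     (- (L - PI * K1_deriv k 0 t)).
Proof.
  intros HL. apply improper_int_from1_of_tends.
  - intros y Hy. pose proof (sum_sq_pos (/ 2 * ln y + k) (PI / 2) (Rgt_not_eq _ _ PI2_RGT_0)).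
    apply (ex_derive_continuous (fun y => exp (- (t * y)) * Cinv_im (/ 2 * ln y + k) (PI / 2))).
    unfold Cinv_im. auto_derive. repeat split; lra.
  - rewrite <- cut_density_01. replace (- (L - RInt (cut_density k t) 0 1))
      with (-1 * (L - RInt (cut_density k t) 0 1)) by ring.
    apply RInt_tends_tail; auto using cut_density_continuous.
    intros y Hy. pose proof (sum_sq_pos (/ 2 * ln y + k) (PI / 2) (Rgt_not_eq _ _ PI2_RGT_0)).
    unfold cut_density, log_weight, Cinv_im. destruct (Req_EM_T y 0); [lra |].
    rewrite Rabs_pos_eq by lra. field. lra.
Qed.

Lemma tail_integral_re k t L : RInt_tends (cut_density k t) 0 L ->
  improper_int_from1 (fun y => exp (- (t * y)) / ((ln y + 2 * k) ^ 2 + PI ^ 2))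
                     ((L - PI * K1_deriv k 0 t) / (2 * PI)).
Proof.
  intros HL. pose proof PI_RGT_0.
  assert (Hden : forall y, 0 < (ln y + 2 * k) ^ 2 + PI ^ 2) by (intros; apply sum_sq_pos; lra).
  apply improper_int_from1_of_tends.
  - intros y Hy. pose proof (Hden y).
    apply (ex_derive_continuous (fun y => exp (- (t * y)) / ((ln y + 2 * k) ^ 2 + PI ^ 2))).
    auto_derive. repeat split; lra.
  - rewrite <- cut_density_01. replace ((L - RInt (cut_density k t) 0 1) / (2 * PI))
      with (/ (2 * PI) * (L - RInt (cut_density k t) 0 1)) by (field; lra).
    apply RInt_tends_tail; auto using cut_density_continuous.
    intros y Hy. pose proof (Hden y). pose proof (sum_sq_pos (/ 2 * ln y + k) (PI / 2) ltac:(lra)).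
    unfold cut_density, log_weight. destruct (Req_EM_T y 0); [lra |].
    rewrite Rabs_pos_eq by lra. field. lra.
Qed.

Theorem proposition5p1 (gam theta : R)
  (Hgam : Un_cv (fun n => sum_f_R0 (fun k => / INR (S k)) n - ln (INR (S n))) gam)
  (Hth : 0 <= theta < PI) (Hth2 : theta <> PI / 2) :
  exists K1 : R -> R,
    bounded_on_nonneg K1 /\ smooth_on_nonneg K1 /\
    forall t, 0 < t ->
      exists I1 I2 : R,
        improper_int_from1
          (fun y => exp (- (t * y)) * Cinv_im (/ 2 * ln y + kappa gam theta) (PI / 2)) I1 /\
        improper_int_from1
          (fun y => exp (- (t * y)) / ((ln y + 2 * kappa gam theta) ^ 2 + PI ^ 2)) I2 /\
        sym_improper_int (Kint_re (kappa gam theta) t) (2 * PI * (- / PI * I1 + K1 t)) /\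
        sym_improper_int (Kint_im (kappa gam theta) t) 0 /\
        - / PI * I1 + K1 t = 2 * I2 + K1 t.
Proof.
  set (k := kappa gam theta).
  exists (K1_deriv k 0). split; [apply K1_bounded | split; [apply K1_smooth |]].
  intros t Ht. pose proof PI_RGT_0.
  (* [L = int_0^oo cut_density], which equals [PI K_theta(t)] *)
  destruct (RInt_tends_exp_dominated (cut_density k t) PI t Ht (cut_density_continuous k t))
    as [L HL]; [intros; apply cut_density_range |].
  exists (- (L - PI * K1_deriv k 0 t)), ((L - PI * K1_deriv k 0 t) / (2 * PI)).
  split; [apply tail_integral_im; auto |].
  split; [apply tail_integral_re; auto |].
  split; [| split].
  - replace (2 * PI * (- / PI * - (L - PI * K1_deriv k 0 t) + K1_deriv k 0 t)) with (2 * L)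
      by (field; lra).
    apply sym_improper_int_even; auto using Kint_re_continuous, Kint_re_even, Kint_re_tends.
  - apply sym_improper_int_odd; auto using Kint_im_continuous, Kint_im_odd.
  - field; lra.
Qed.
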